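(* Assume: (i) $\nabla_\theta G$ is Lipschitz-continuous with constant $L_0$; (ii) $\|J_\theta f(x_i^u;\theta)\|\le M$ for all $i\in\{1,\dots,N^u\}$ and all $\theta$. If the learning rates satisfy $\alpha_t^2\beta_t<(4M^2L_0)^{-1}$, then each step of the algorithm decreases the labeled loss, regardless of which unlabeled mini-batch is selected: $$G(\theta_{t+1})\le G(\theta_t)\quad\text{for each }t.$$ Moreover, equality holds if and only if $\nabla\tilde y=0$ for the unlabeled batch selected at step $t$.
   Context: **Model and data.** Let $f(x;\theta)\in\mathbb{R}^C$ be a classifier, continuously differentiable in the parameter $\theta\in\mathbb{R}^d$. The labeled data are $\{(x_k^l,y_k)\}_{k=1}^{N^l}$ and the unlabeled data are $\mathcal D^u=\{x_i^u\}_{i=1}^{N^u}$. Write $J_\theta f(x;\theta)\in\mathbb{R}^{C\times d}$ for the Jacobian of $f$ in $\theta$, with $\|\cdot\|$ the operator norm. **Losses.** The loss of a pair is $\mathcal L(x,y;\theta)=\|f(x;\theta)-y\|_2^2$ (squared error). The labeled loss over the full labeled set is $$G(\theta)=\frac{1}{N^l}\sum_{k=1}^{N^l}\mathcal L(x_k^l,y_k;\theta).$$ **The algorithm (meta-gradient SSL).** Start from $\theta_1$, with regular learning rates $\alpha_t>0$ and meta learning rates $\beta_t>0$. All labeled data are used at every step. At step $t$: 1. An unlabeled mini-batch $x_1^u,\dots,x_{B^u}^u$ is sampled from $\mathcal D^u$. 2. For pseudo labels $\tilde y=(\tilde y_1,\dots,\tilde y_{B^u})$, regarded as one vector, set $$\tilde\theta_{t+1}(\tilde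 y)=\theta_t-\frac{\alpha_t}{B^u}\sum_{i=1}^{B^u}\nabla_\theta\mathcal L(x_i^u,\tilde y_i;\theta_t)$$ and $H(\tilde y)=G(\tilde\theta_{t+1}(\tilde y))$. 3. The pseudo labels are initialized at $\tilde y_i=f(x_i^u;\theta_t)$. 4. The meta-gradient is $\nabla\tilde y=\nabla_{\tilde y}H(\tilde y)$, evaluated at this initialization. 5. The pseudo labels are updated as $\hat y=\tilde y-\beta_t\nabla\tilde y$. 6. The parameters are updated as $\theta_{t+1}=\tilde\theta_{t+1}(\hat y)=\theta_t-\frac{\alpha_t}{B^u}\sum_{i=1}^{B^u}\nabla_\theta\mathcal L(x_i^u,\hat y_i;\theta_t)$. *)

From HB Require Import structures.
From mathcomp Require Import all_boot all_order all_algebra.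
From mathcomp Require Import all_classical all_reals all_analysis.
Set Implicit Arguments. Unset Strict Implicit. Unset Printing Implicit Defensive.
Import Order.TTheory GRing.Theory Num.Theory.
Import numFieldNormedType.Exports.
Local Open Scope classical_set_scope.
Local Open Scope ring_scope.

Section MetaSSL.
Variable R : realType.

Definition norm2 {n} (v : 'rV[R]_n) : R := Num.sqrt (\sum_(j < n) v 0 j ^+ 2).

Definition opnorm {m n} (A : 'M[R]_(m, n)) : R :=
  sup [set norm2 (v *m A^T) | v in [set v : 'rV[R]_n | norm2 v <= 1]].

Definition mgrad {m n} (F : 'M[R]_(m, n) -> R) (A : 'M[R]_(m, n)) : 'M[R]_(m, n) :=
  \matrix_(i, j) ('D_(delta_mx i j) F A).

Definition jac {d C} (F : 'rV[R]_d -> 'rV[R]_C) (th : 'rV[R]_d) : 'M[R]_(C, d) :=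
  \matrix_(c, j) (('D_(delta_mx 0 j) F th) 0 c).

Definition C1 {d C} (F : 'rV[R]_d -> 'rV[R]_C) : Prop :=
  (forall th, differentiable F th) /\ continuous (jac F).

Definition loss {X : Type} {d C} (f : X -> 'rV[R]_d -> 'rV[R]_C)
  (x : X) (y : 'rV[R]_C) (th : 'rV[R]_d) : R :=
  \sum_(c < C) (f x th - y) 0 c ^+ 2.

Definition Gloss {X : Type} {d C Nl} (f : X -> 'rV[R]_d -> 'rV[R]_C)
  (xl : 'I_Nl -> X) (yl : 'I_Nl -> 'rV[R]_C) (th : 'rV[R]_d) : R :=
  (Nl%:R)^-1 * \sum_(k < Nl) loss f (xl k) (yl k) th.

(* One step of the algorithm.  The mini-batch is batch : 'I_B -> 'I_Nu,
   pseudo labels are stored as the rows of a B x C matrix (one vector). *)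
Section Step.
Context {X : Type} {d C Nl Nu B : nat} (f : X -> 'rV[R]_d -> 'rV[R]_C)
  (xl : 'I_Nl -> X) (yl : 'I_Nl -> 'rV[R]_C) (xu : 'I_Nu -> X)
  (batch : 'I_B -> 'I_Nu) (alpha beta : R) (th_t : 'rV[R]_d).

Definition theta_tilde (yt : 'M[R]_(B, C)) : 'rV[R]_d :=
  th_t - (alpha / B%:R) *:
    \sum_(i < B) mgrad (fun th => loss f (xu (batch i)) (row i yt) th) th_t.

Definition Hmeta (yt : 'M[R]_(B, C)) : R := Gloss f xl yl (theta_tilde yt).

Definition y_init : 'M[R]_(B, C) := \matrix_(i < B) f (xu (batch i)) th_t.

Definition meta_grad : 'M[R]_(B, C) := mgrad Hmeta y_init.

Definition y_hat : 'M[R]_(B, C) := y_init - beta *: meta_grad.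

Definition theta_next : 'rV[R]_d := theta_tilde y_hat.
End Step.

End MetaSSL.

(* Write J_i for the Jacobian of f(x_i^u; .) at theta_t, g = grad G(theta_t),
   c = alpha/B and u_i = J_i g (the labeled gradient pulled back to the output
   space of the i-th unlabeled point).  Because the loss is the squared error,
   grad_theta L(x, y; theta) = 2 (f(x;theta) - y) J, so theta_tilde is affine
   in the pseudo labels: theta_tilde(y) = theta_t + 2c sum_i (y_i - f_i) J_i.
   Consequently the meta-gradient is the matrix with rows 2c u_i, and
   theta_{t+1} = theta_t - q w with q = (2c)^2 beta and w = sum_i u_i J_i.
   With S = sum_i |u_i|^2 we have <w, g> = S and, by |J_i| <= M and
   Cauchy-Schwarz, |w|^2 <= B M^2 S.  The descent lemma for an L0-smooth G
   (proved from the mean value theorem) then gives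
       G(theta_{t+1}) - G(theta_t) <= - q S (1 - L0 q B M^2),
   and L0 q B M^2 = 4 M^2 L0 alpha^2 beta / B < 1.  Hence the loss decreases,
   strictly unless S = 0, i.e. unless the meta-gradient vanishes. *)
From HB Require Import structures.
From mathcomp Require Import all_boot all_order all_algebra.
From mathcomp Require Import all_classical all_reals all_analysis.
From mathcomp Require Import ring lra.
Import Order.TTheory GRing.Theory Num.Theory.
Import numFieldNormedType.Exports.
Local Open Scope ring_scope.

Section EuclideanRows.
Context {R : realType}.
Implicit Types m n : nat.

Definition dot {n} (a b : 'rV[R]_n) : R := \sum_j a 0 j * b 0 j.

Lemma norm2E {n} (v : 'rV[R]_n) : norm2 v = Num.sqrt (dot v v).
Proof. by rewrite /norm2 /dot; under eq_bigr do rewrite expr2. Qed.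

Lemma dot_ge0 {n} (v : 'rV[R]_n) : 0 <= dot v v.
Proof. by apply: sumr_ge0 => j _; rewrite -expr2 sqr_ge0. Qed.

Lemma norm2_ge0 {n} (v : 'rV[R]_n) : 0 <= norm2 v.
Proof. by rewrite norm2E sqrtr_ge0. Qed.

Lemma norm2_sqr {n} (v : 'rV[R]_n) : norm2 v ^+ 2 = dot v v.
Proof. by rewrite norm2E sqr_sqrtr // dot_ge0. Qed.

Lemma dot0l {n} (b : 'rV[R]_n) : dot 0 b = 0.
Proof. by rewrite /dot big1 // => j _; rewrite mxE mul0r. Qed.

Lemma dot_eq0 {n} (v : 'rV[R]_n) : dot v v = 0 -> v = 0.
Proof.
move=> h; apply/rowP => j; rewrite mxE.
have := @psumr_eq0P R _ xpredT (fun j => v 0 j * v 0 j).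
move=> /(_ (fun j _ => ltac:(by rewrite -expr2 sqr_ge0)) h j isT) /eqP.
by rewrite mulf_eq0 orbb => /eqP.
Qed.

Lemma norm2_eq0 {n} (v : 'rV[R]_n) : norm2 v = 0 -> v = 0.
Proof. by move=> h; apply: dot_eq0; rewrite -norm2_sqr h expr2 mulr0. Qed.

Lemma norm2_gt0 {n} (v : 'rV[R]_n) : v != 0 -> 0 < norm2 v.
Proof.
by move=> v0; rewrite lt_def norm2_ge0 andbT; apply: contra v0 => /eqP/norm2_eq0->.
Qed.

Lemma dotC {n} (a b : 'rV[R]_n) : dot a b = dot b a.
Proof. by apply: eq_bigr => j _; rewrite mulrC. Qed.

Lemma dotDl {n} (a b c : 'rV[R]_n) : dot (a + b) c = dot a c + dot b c.
Proof. by rewrite /dot -big_split; apply: eq_bigr => j _; rewrite !mxE mulrDl. Qed.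

Lemma dotNl {n} (a b : 'rV[R]_n) : dot (- a) b = - dot a b.
Proof. by rewrite /dot -sumrN; apply: eq_bigr => j _; rewrite mxE mulNr. Qed.

Lemma dotZl {n} (a b : 'rV[R]_n) k : dot (k *: a) b = k * dot a b.
Proof. by rewrite /dot mulr_sumr; apply: eq_bigr => j _; rewrite mxE mulrA. Qed.

Lemma dotZr {n} (a b : 'rV[R]_n) k : dot a (k *: b) = k * dot a b.
Proof. by rewrite dotC dotZl dotC. Qed.

Lemma dot_suml {n I} (r : seq I) (P : pred I) (F : I -> 'rV[R]_n) b :
  dot (\sum_(i <- r | P i) F i) b = \sum_(i <- r | P i) dot (F i) b.
Proof.
rewrite /dot exchange_big /=; apply: eq_bigr => j _.
by rewrite summxE mulr_suml.
Qed.

Lemma dot_mulmx {m n} (u : 'rV[R]_m) (A : 'M[R]_(m, n)) z :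
  dot (u *m A) z = dot u (z *m A^T).
Proof.
rewrite /dot; under eq_bigr do rewrite mxE mulr_suml.
rewrite exchange_big /=; apply: eq_bigr => i _.
rewrite mxE mulr_sumr; apply: eq_bigr => j _; rewrite !mxE; ring.
Qed.

Lemma dot_delta {n} (w : 'rV[R]_n) k : dot 'e_k w = w 0 k.
Proof.
rewrite /dot (bigD1 k) //= big1 ?addr0 => [|j ne]; first by rewrite !mxE !eqxx mul1r.
by rewrite !mxE (negbTE ne) andbF mul0r.
Qed.

Lemma norm2Z {n} (v : 'rV[R]_n) k : norm2 (k *: v) = `|k| * norm2 v.
Proof.
by rewrite !norm2E dotZl dotZr mulrA -expr2 sqrtrM ?sqr_ge0 // sqrtr_sqr.
Qed.

Lemma norm2N {n} (v : 'rV[R]_n) : norm2 (- v) = norm2 v.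
Proof. by rewrite -scaleN1r norm2Z normrN normr1 mul1r. Qed.

(* Cauchy-Schwarz, from the nonnegativity of |b| a - |a| b squared. *)
Lemma cauchy_schwarz {n} (a b : 'rV[R]_n) : dot a b <= norm2 a * norm2 b.
Proof.
set A := norm2 a; set Bb := norm2 b.
have hA : 0 <= A by apply: norm2_ge0.
have hB : 0 <= Bb by apply: norm2_ge0.
have expand : dot (Bb *: a - A *: b) (Bb *: a - A *: b) =
    Bb ^+ 2 * dot a a - 2 * Bb * A * dot a b + A ^+ 2 * dot b b.
  rewrite /dot !mulr_sumr -sumrN -!big_split.
  by apply: eq_bigr => j _ /=; rewrite !mxE; ring.
have h := dot_ge0 (Bb *: a - A *: b).
rewrite expand -!norm2_sqr -/A -/Bb in h.
have [/eqP|ABpos] := eqVneq (A * Bb) 0.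
  rewrite mulf_eq0 => /orP[/eqP/norm2_eq0 -> | /eqP/norm2_eq0 ->].
    by rewrite dot0l mulr_ge0.
  by rewrite dotC dot0l mulr_ge0.
have ABp : 0 < A * Bb by rewrite lt_def ABpos /= mulr_ge0.
nra.
Qed.

Lemma cauchy_schwarz_sqr {n} (a b : 'rV[R]_n) : dot a b ^+ 2 <= dot a a * dot b b.
Proof.
have abs_le : `|dot a b| <= norm2 a * norm2 b.
  by rewrite ler_norml cauchy_schwarz andbT lerNl -dotNl -(norm2N a) cauchy_schwarz.
rewrite -!norm2_sqr -exprMn -real_normK ?num_real //.
by rewrite ler_sqr ?nnegrE ?normr_ge0 ?mulr_ge0 ?norm2_ge0.
Qed.

Lemma dot_sum_le {n B} (z : 'I_B -> 'rV[R]_n) :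
  dot (\sum_i z i) (\sum_i z i) <= B%:R * \sum_i dot (z i) (z i).
Proof.
have -> : B%:R * \sum_i dot (z i) (z i) = \sum_j B%:R * \sum_i z i 0 j * z i 0 j.
  by rewrite -mulr_sumr /dot exchange_big.
rewrite /dot; apply: ler_sum => j _.
rewrite summxE -expr2.
set zj := \row_(i < B) z i 0 j; set one := \row_(i < B) (1 : R).
have zj_one : dot zj one = \sum_i z i 0 j.
  by apply: eq_bigr => i _; rewrite !mxE mulr1.
have zj_zj : dot zj zj = \sum_i z i 0 j * z i 0 j.
  by apply: eq_bigr => i _; rewrite !mxE.
have one_one : dot one one = B%:R.
  by rewrite /dot (eq_bigr (fun=> 1)) ?sumr_const ?card_ord // => i _; rewrite !mxE mulr1.
by have := cauchy_schwarz_sqr zj one; rewrite zj_one zj_zj one_one mulrC.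
Qed.

Lemma opnorm_bound {m n} (A : 'M[R]_(m, n)) M : opnorm A <= M ->
  0 <= M /\ forall v : 'rV[R]_n, norm2 (v *m A^T) <= M * norm2 v.
Proof.
move=> hM.
set S := [set norm2 (v *m A^T) | v in [set v : 'rV[R]_n | norm2 v <= 1]]%classic.
have hub : has_ubound S.
  exists (Num.sqrt (\sum_c dot (row c A) (row c A))) => x [v hv <-].
  rewrite norm2E ler_sqrt; last by apply: sumr_ge0 => c _; apply: dot_ge0.
  apply: ler_sum => c _; rewrite -expr2.
  have -> : (v *m A^T) 0 c = dot v (row c A).
    by rewrite mxE; apply: eq_bigr => j _; rewrite !mxE.
  apply: le_trans (cauchy_schwarz_sqr _ _) _.
  by rewrite ler_piMl ?dot_ge0 // -norm2_sqr expr_le1 // norm2_ge0.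
have hsup v : norm2 v <= 1 -> norm2 (v *m A^T) <= M.
  by move=> hv; apply: le_trans hM; apply: (ub_le_sup hub); exists v.
have norm2_0 k : norm2 (0 : 'rV[R]_k) = 0 by rewrite norm2E dot0l sqrtr0.
have M0 : 0 <= M.
  by apply: le_trans (hsup 0 _); rewrite ?norm2_ge0 // norm2_0 ler01.
split=> // v; have [->|v0] := eqVneq v 0; first by rewrite mul0mx !norm2_0 mulr0.
have np : 0 < norm2 v by exact: norm2_gt0.
have := hsup ((norm2 v)^-1 *: v).
rewrite norm2Z -scalemxAl norm2Z ger0_norm ?invr_ge0 ?norm2_ge0 //.
by rewrite mulVf ?gt_eqF // lexx => /(_ isT); rewrite ler_pdivrMl // mulrC.
Qed.

Lemma norm2_mulmx_le {m n} {A : 'M[R]_(m, n)} {M : R} (u : 'rV[R]_m) :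
  opnorm A <= M -> norm2 (u *m A) <= M * norm2 u.
Proof.
move=> /opnorm_bound [M0 hv]; set w := u *m A.
have h1 : norm2 w ^+ 2 <= norm2 u * (M * norm2 w).
  rewrite norm2_sqr {1}/w dot_mulmx.
  by apply: le_trans (cauchy_schwarz _ _) _; rewrite ler_wpM2l ?norm2_ge0.
have hw := norm2_ge0 w; have hu := norm2_ge0 u.
have [w0|wn0] := eqVneq (norm2 w) 0; first by rewrite w0 mulr_ge0.
have wp : 0 < norm2 w by rewrite lt_def wn0.
nra.
Qed.

End EuclideanRows.

Section Calculus.
Context {R : realType}.

Lemma derive_dir_sum {d} (W : normedModType R) (F : 'rV[R]_d -> W) th v :
  differentiable F th -> 'D_v F th = \sum_j v 0 j *: 'D_('e_j) F th.
Proof.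
move=> dF; rewrite deriveE // {1}(row_sum_delta v) linear_sum.
by apply: eq_bigr => j _; rewrite linearZ deriveE.
Qed.

Lemma derive_grad {d} (G : 'rV[R]_d -> R) th v :
  differentiable G th -> 'D_v G th = dot v (mgrad G th).
Proof.
by move=> dG; rewrite derive_dir_sum // /dot; apply: eq_bigr => j _; rewrite mxE.
Qed.

Lemma coord_derivable {d C} (F : 'rV[R]_d -> 'rV[R]_C) th v c :
  differentiable F th -> derivable (fun t => F t 0 c) th v.
Proof. by move=> dF; move: (@diff_derivable _ _ _ _ _ v dF) => /derivable_mxP; apply. Qed.

Lemma coord_derive {d C} (F : 'rV[R]_d -> 'rV[R]_C) th v c :
  differentiable F th -> 'D_v (fun t => F t 0 c) th = ('D_v F th) 0 c.
Proof. by move=> dF; rewrite derive_mx ?mxE //; apply: diff_derivable. Qed.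

Lemma lossE (X : Type) {d C} (f : X -> 'rV[R]_d -> 'rV[R]_C) x y :
  loss f x y = \sum_c ((fun t => f x t 0 c) - cst (y 0 c)) ^+ 2.
Proof.
by apply/funext => t; rewrite /loss fct_sumE; apply: eq_bigr => c _; rewrite !mxE.
Qed.

Lemma loss_diff (X : Type) {d C} (f : X -> 'rV[R]_d -> 'rV[R]_C) x y th :
  differentiable (f x) th -> differentiable (loss f x y) th.
Proof.
move=> dF; rewrite lossE; apply: differentiable_sum => c.
apply: differentiableX; apply: differentiableB; last exact: differentiable_cst.
have -> : (fun t => f x t 0 c) = (fun N : 'M[R]_(1, C) => N 0 c) \o f x by [].
by apply: differentiable_comp => //; exact: differentiable_coord.
Qed.

Lemma Gloss_diff (X : Type) {d C Nl} (f : X -> 'rV[R]_d -> 'rV[R]_C)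
    (xl : 'I_Nl -> X) yl th :
  (forall x, differentiable (f x) th) -> differentiable (Gloss f xl yl) th.
Proof.
move=> dF.
have -> : Gloss f xl yl = (fun=> (Nl%:R)^-1) * \sum_k loss f (xl k) (yl k).
  by apply/funext => t; rewrite /Gloss fct_sumE.
apply: differentiableM; first exact: differentiable_cst.
by apply: differentiable_sum => k; apply: loss_diff.
Qed.

Lemma loss_derive (X : Type) {d C} (f : X -> 'rV[R]_d -> 'rV[R]_C) x y th v :
  differentiable (f x) th ->
  'D_v (loss f x y) th = \sum_c 2 * (f x th - y) 0 c * ('D_v (f x) th) 0 c.
Proof.
move=> dF; have dFc c : derivable (fun t => f x t 0 c) th v by exact: coord_derivable.
rewrite lossE derive_sum; last first.
  by move=> c; apply: derivableX; apply: derivableB => //; exact: derivable_cst.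
apply: eq_bigr => c _; rewrite deriveX; last first.
  by apply: derivableB => //; exact: derivable_cst.
rewrite deriveB ?derivable_cst // derive_cst subr0 coord_derive //.
by rewrite !mxE /= expr1.
Qed.

(* It is affine in the label y,
   which is what makes the meta-gradient computable in closed form. *)
Lemma grad_loss (X : Type) {d C} (f : X -> 'rV[R]_d -> 'rV[R]_C) x y th :
  differentiable (f x) th ->
  mgrad (loss f x y) th = 2 *: ((f x th - y) *m jac (f x) th).
Proof.
move=> dF; apply/rowP => j; rewrite !mxE loss_derive // mulr_sumr.
by apply: eq_bigr => c _; rewrite !mxE -mulrA.
Qed.

Lemma derive_along_line {V1 V2 W : normedModType R} {F : V1 -> W} {G : V2 -> W}
    {a v : V1} {b u : V2} :
  (forall h : R, F (h *: v + a) = G (h *: u + b)) ->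
  'D_v F a = 'D_u G b /\ (derivable F a v <-> derivable G b u).
Proof.
move=> h; have e0 : F a = G b by have := h 0; rewrite !scale0r !add0r.
rewrite /derive /derivable.
suff -> : (fun h0 : R => h0^-1 *: ((F \o shift a) (h0 *: v) - F a)) =
          (fun h0 : R => h0^-1 *: ((G \o shift b) (h0 *: u) - G b)) by [].
by apply/funext => h0 /=; rewrite h e0.
Qed.

Lemma lipschitz_ge0 {d n} {F : 'rV[R]_d -> 'rV[R]_n} {L0 : R} (th1 th2 : 'rV[R]_d) :
  (forall a b, norm2 (F a - F b) <= L0 * norm2 (a - b)) ->
  th1 != th2 -> 0 <= L0.
Proof.
move=> hL ne; have := hL th1 th2; have := norm2_ge0 (F th1 - F th2).
have : 0 < norm2 (th1 - th2) by apply: norm2_gt0; rewrite subr_eq0.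
nra.
Qed.

(* Descent lemma: for G with L0-Lipschitz gradient,
   G(theta + D) - G(theta) <= <D, grad G(theta)> + L0 |D|^2.
   By the mean value theorem on t |-> G(theta + t D) the left side is
   <D, grad G(theta + c D)> for some c in (0, 1), and Cauchy-Schwarz bounds
   the deviation from <D, grad G(theta)>. *)
Lemma descent {d} {G : 'rV[R]_d -> R} {L0 : R} (th D : 'rV[R]_d) :
  (forall t, differentiable G t) ->
  (forall th1 th2, norm2 (mgrad G th1 - mgrad G th2) <= L0 * norm2 (th1 - th2)) ->
  0 <= L0 ->
  G (D + th) - G th <= dot D (mgrad G th) + L0 * dot D D.
Proof.
move=> dG hL L0p.
pose phi := fun t : R => G (t *: D + th).
have phi_line t : 'D_1 phi t = 'D_D G (t *: D + th) /\
    (derivable phi t 1 <-> derivable G (t *: D + th) D).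
  apply: derive_along_line => h.
  by rewrite /phi /GRing.scale /= mulr1 -/(GRing.scale _ _) scalerDl addrA.
have phi_deriv t : is_derive t (1 : R) phi ('D_D G (t *: D + th)).
  have [e1 e2] := phi_line t; apply: DeriveDef => //.
  by apply/e2; apply: diff_derivable.
have phi_cont : {within `[0, 1], continuous phi}%classic.
  apply: continuous_subspaceT => t.
  apply: differentiable_continuous; apply/derivable1_diffP.
  by have [_ ->] := phi_line t; apply: diff_derivable.
have [c cI mvt] := MVT ltr01 (fun t _ => phi_deriv t) phi_cont.
move: cI; rewrite in_itv /= => /andP[c0 c1].
move: mvt; rewrite /phi scale1r scale0r add0r subr0 mulr1 => ->.
rewrite derive_grad // -[X in dot D X](subrK (mgrad G th)) dotC dotDl.
rewrite [dot (mgrad G th) D]dotC addrC lerD2l.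
apply: le_trans (cauchy_schwarz _ _) _.
have hLc := hL (c *: D + th) th.
rewrite addrK norm2Z (ger0_norm (ltW c0)) in hLc.
have hn := norm2_ge0 D.
apply: le_trans (ler_wpM2r hn hLc) _.
rewrite -norm2_sqr.
have hP : 0 <= L0 * norm2 D ^+ 2 by rewrite mulr_ge0 // sqr_ge0.
nra.
Qed.

End Calculus.

Section OneStep.
Context {R : realType} {X : Type} {d C Nl Nu B : nat}
  {f : X -> 'rV[R]_d -> 'rV[R]_C}
  {xl : 'I_Nl -> X} {yl : 'I_Nl -> 'rV[R]_C} {xu : 'I_Nu -> X}
  {batch : 'I_B -> 'I_Nu} {alpha beta : R} {th_t : 'rV[R]_d}.
Hypothesis f_diff : forall x th, differentiable (f x) th.

Local Notation G := (Gloss f xl yl).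
Local Notation y0 := (y_init f xu batch th_t).

Let G_diff th : differentiable G th.
Proof. by apply: Gloss_diff => x; apply: f_diff. Qed.

Definition batch_jac (i : 'I_B) : 'M[R]_(C, d) := jac (f (xu (batch i))) th_t.

Definition backprop (yt : 'M[R]_(B, C)) : 'rV[R]_d :=
  \sum_i row i yt *m batch_jac i.

Definition pulled_grad (i : 'I_B) : 'rV[R]_C := mgrad G th_t *m (batch_jac i)^T.

(* S = sum_i |u_i|^2, which vanishes exactly when the meta-gradient does. *)
Definition meta_gain : R := \sum_i dot (pulled_grad i) (pulled_grad i).

(* The actual parameter step is - meta_rate * meta_dir. *)
Definition meta_dir : 'rV[R]_d := \sum_i pulled_grad i *m batch_jac i.

Definition meta_rate : R := (2 * (alpha / B%:R)) ^+ 2 * beta.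

Lemma backpropD a b : backprop (a + b) = backprop a + backprop b.
Proof.
rewrite /backprop -big_split; apply: eq_bigr => i _ /=.
by rewrite -mulmxDl; congr (_ *m _); apply/rowP => j; rewrite !mxE.
Qed.

Lemma backpropZ k a : backprop (k *: a) = k *: backprop a.
Proof.
rewrite /backprop scaler_sumr; apply: eq_bigr => i _ /=.
by rewrite scalemxAl; congr (_ *m _); apply/rowP => j; rewrite !mxE.
Qed.

Lemma backprop_delta i k : backprop (delta_mx i k) = 'e_k *m batch_jac i.
Proof.
rewrite /backprop (bigD1 i) //= big1 ?addr0 => [|i' ne].
  by rewrite rowE mul_delta_mx_cond eqxx mulr1n.
by rewrite rowE mul_delta_mx_cond (negbTE ne) mulr0n mul0mx.
Qed.

Lemma meta_gain_ge0 : 0 <= meta_gain.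
Proof. by apply: sumr_ge0 => i _; apply: dot_ge0. Qed.

Lemma theta_tildeE yt : theta_tilde f xu batch alpha th_t yt =
  th_t + (2 * (alpha / B%:R)) *: (backprop yt - backprop y0).
Proof.
rewrite /theta_tilde.
under eq_bigr do rewrite grad_loss //.
have -> : \sum_i 2 *: ((f (xu (batch i)) th_t - row i yt) *m
                        jac (f (xu (batch i))) th_t)
    = 2 *: (backprop y0 - backprop yt).
  rewrite /backprop -sumrB scaler_sumr; apply: eq_bigr => i _.
  by rewrite /y_init rowK mulmxBl.
by rewrite scalerA -scalerN opprB mulrC.
Qed.

Lemma meta_gradE : meta_grad f xl yl xu batch alpha th_t =
  \matrix_(i, k) (2 * (alpha / B%:R) * pulled_grad i 0 k).
Proof.
apply/matrixP => i k; rewrite /meta_grad /mgrad mxE [RHS]mxE.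
have along (h : R) : Hmeta f xl yl xu batch alpha th_t (h *: delta_mx i k + y0)
    = G (h *: ((2 * (alpha / B%:R)) *: ('e_k *m batch_jac i)) + th_t).
  rewrite /Hmeta theta_tildeE backpropD backpropZ backprop_delta addrK addrC.
  by rewrite !scalerA mulrC.
have [-> _] := derive_along_line along.
by rewrite derive_grad ?G_diff // dotZl dot_mulmx dot_delta.
Qed.

Lemma theta_nextE :
  theta_next f xl yl xu batch alpha beta th_t = (- meta_rate) *: meta_dir + th_t.
Proof.
have back_mg : backprop (meta_grad f xl yl xu batch alpha th_t) =
    (2 * (alpha / B%:R)) *: meta_dir.
  rewrite meta_gradE /backprop /meta_dir scaler_sumr; apply: eq_bigr => i _.
  by rewrite scalemxAl; congr (_ *m _); apply/rowP => k; rewrite !mxE.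
rewrite /theta_next /y_hat theta_tildeE -scaleNr backpropD backpropZ.
rewrite [backprop y0 + _]addrC addrK back_mg addrC !scalerA /meta_rate.
by congr (_ *: _ + _); ring.
Qed.

Lemma theta_next_fixed : meta_grad f xl yl xu batch alpha th_t = 0 ->
  theta_next f xl yl xu batch alpha beta th_t = th_t.
Proof.
move=> mg0; rewrite /theta_next /y_hat mg0 scaler0 subr0 theta_tildeE.
by rewrite subrr scaler0 addr0.
Qed.

Lemma meta_grad_eq0 : 0 < alpha ->
  meta_grad f xl yl xu batch alpha th_t = 0 <-> meta_gain = 0.
Proof.
move=> a0; rewrite meta_gradE; split => [mg0 | S0].
  rewrite /meta_gain big1 // => i _.
  have B0 : (0 < B)%N := leq_ltn_trans (leq0n i) (ltn_ord i).
  have c0 : 2 * (alpha / B%:R) != 0 by rewrite gt_eqF // mulr_gt0 // divr_gt0 // ltr0n.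
  suff -> : pulled_grad i = 0 by rewrite dot0l.
  apply/rowP => k; move/matrixP: mg0 => /(_ i k); rewrite !mxE => /eqP.
  by rewrite mulf_eq0 (negbTE c0) => /eqP.
have u0 i : pulled_grad i = 0.
  by apply: dot_eq0; exact: (psumr_eq0P (fun i _ => dot_ge0 (pulled_grad i)) S0).
by apply/matrixP => i k; rewrite [LHS]mxE u0 !mxE mulr0.
Qed.

Lemma dot_meta_dir_grad : dot meta_dir (mgrad G th_t) = meta_gain.
Proof. by rewrite dot_suml; apply: eq_bigr => i _; rewrite dot_mulmx. Qed.

Lemma meta_dir_bound M :
  (forall i th, opnorm (jac (f (xu i)) th) <= M) ->
  dot meta_dir meta_dir <= B%:R * (M ^+ 2 * meta_gain).
Proof.
move=> hM; apply: le_trans (dot_sum_le _) _.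
rewrite ler_wpM2l ?ler0n // /meta_gain mulr_sumr; apply: ler_sum => i _.
have hJ := norm2_mulmx_le (pulled_grad i) (hM (batch i) th_t).
rewrite -!norm2_sqr -exprMn ler_sqr ?nnegrE ?norm2_ge0 //.
exact: le_trans (norm2_ge0 _) hJ.
Qed.

(* If meta_dir = 0
   both sides vanish; otherwise L0 >= 0 and the descent lemma applies to the
   step - q w, whose inner product with g is - q S and whose squared norm is at
   most q^2 B M^2 S. *)
Lemma step_decrease L0 M :
  (forall th1 th2, norm2 (mgrad G th1 - mgrad G th2) <= L0 * norm2 (th1 - th2)) ->
  (forall i th, opnorm (jac (f (xu i)) th) <= M) ->
  G (theta_next f xl yl xu batch alpha beta th_t) - G th_t
    <= - (meta_rate * meta_gain) * (1 - L0 * meta_rate * B%:R * M ^+ 2).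
Proof.
move=> hL hM; rewrite theta_nextE.
have [w0|wn0] := eqVneq meta_dir 0.
  have S0 : meta_gain = 0 by rewrite -dot_meta_dir_grad w0 dot0l.
  by rewrite w0 scaler0 add0r subrr S0 mulr0 oppr0 mul0r.
have L0p : 0 <= L0.
  by apply: (lipschitz_ge0 (meta_dir + th_t) th_t hL); rewrite -subr_eq0 addrK.
apply: le_trans (descent th_t ((- meta_rate) *: meta_dir) G_diff hL L0p) _.
rewrite dotZl dot_meta_dir_grad dotZl dotZr.
have := ler_wpM2l (mulr_ge0 L0p (sqr_ge0 meta_rate)) (meta_dir_bound M hM).
nra.
Qed.

Lemma meta_gain_gt0_batch : 0 < meta_gain -> (0 < B)%N.
Proof.
move=> S0; rewrite lt0n; apply/eqP => B0; move: S0.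
by rewrite /meta_gain big1 ?ltxx // => i; have := ltn_ord i; rewrite {2}B0.
Qed.

Lemma meta_rate_gt0 : 0 < alpha -> 0 < beta -> (0 < B)%N -> 0 < meta_rate.
Proof.
move=> a0 b0 B0.
by rewrite mulr_gt0 // exprn_gt0 // mulr_gt0 // divr_gt0 // ltr0n.
Qed.

Lemma meta_rate_lt1 L0 M : (0 < B)%N ->
  4 * M ^+ 2 * L0 * (alpha ^+ 2 * beta) < 1 -> L0 * meta_rate * B%:R * M ^+ 2 < 1.
Proof.
move=> B0 hcond; have Bp : (0 : R) < B%:R by rewrite ltr0n.
have -> : L0 * meta_rate * B%:R * M ^+ 2 =
    4 * M ^+ 2 * L0 * (alpha ^+ 2 * beta) / B%:R.
  by rewrite /meta_rate; field; rewrite gt_eqF.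
by rewrite ltr_pdivrMr // mul1r; apply: lt_le_trans hcond _; rewrite ler1n.
Qed.

Lemma step_descends L0 M : 0 < alpha -> 0 < beta ->
  (forall th1 th2, norm2 (mgrad G th1 - mgrad G th2) <= L0 * norm2 (th1 - th2)) ->
  (forall i th, opnorm (jac (f (xu i)) th) <= M) ->
  4 * M ^+ 2 * L0 * (alpha ^+ 2 * beta) < 1 ->
  G (theta_next f xl yl xu batch alpha beta th_t) <= G th_t /\
  (0 < meta_gain -> G (theta_next f xl yl xu batch alpha beta th_t) < G th_t).
Proof.
move=> a0 b0 hL hM hcond; have dec := step_decrease L0 M hL hM.
have strict : 0 < meta_gain -> G (theta_next f xl yl xu batch alpha beta th_t) < G th_t.
  move=> S0; have B0 := meta_gain_gt0_batch S0.
  have q0 := meta_rate_gt0 a0 b0 B0; have rho := meta_rate_lt1 L0 M B0 hcond.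
  rewrite -subr_lt0; apply: le_lt_trans dec _.
  rewrite mulNr oppr_lt0; apply: mulr_gt0; first exact: mulr_gt0.
  by rewrite subr_gt0.
split=> //; have [S0|S0] := eqVneq meta_gain 0; last first.
  by apply/ltW/strict; rewrite lt_def S0 meta_gain_ge0.
by rewrite -subr_le0; apply: le_trans dec _; rewrite S0 mulr0 oppr0 mul0r.
Qed.

End OneStep.

Theorem theorem1 (R : realType) (X : Type) (d C Nl Nu B : nat)
  (f : X -> 'rV[R]_d -> 'rV[R]_C)
  (xl : 'I_Nl -> X) (yl : 'I_Nl -> 'rV[R]_C) (xu : 'I_Nu -> X)
  (L0 M alpha beta : R) (th_t : 'rV[R]_d) (batch : 'I_B -> 'I_Nu) :
  (forall x, C1 (f x)) ->
  (forall th1 th2 : 'rV[R]_d,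
      norm2 (mgrad (Gloss f xl yl) th1 - mgrad (Gloss f xl yl) th2)
      <= L0 * norm2 (th1 - th2)) ->
  (forall (i : 'I_Nu) (th : 'rV[R]_d), opnorm (jac (f (xu i)) th) <= M) ->
  0 < alpha -> 0 < beta ->
  4 * M ^+ 2 * L0 * (alpha ^+ 2 * beta) < 1 ->
  Gloss f xl yl (theta_next f xl yl xu batch alpha beta th_t)
    <= Gloss f xl yl th_t
  /\ (Gloss f xl yl (theta_next f xl yl xu batch alpha beta th_t)
        = Gloss f xl yl th_t
      <-> meta_grad f xl yl xu batch alpha th_t = 0).
Proof.
move=> hC1 hL hM a0 b0 hcond.
have f_diff x th : differentiable (f x) th by exact: (hC1 x).1.
have [le_step lt_step] :=
  step_descends (batch := batch) (th_t := th_t) f_diff L0 M a0 b0 hL hM hcond.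
split=> //; split => [eq_loss | /(theta_next_fixed (beta := beta)) ->] //.
(* Equality forces S = 0, since S > 0 would give a strict decrease. *)
apply/(meta_grad_eq0 f_diff a0)/eqP.
rewrite eq_le meta_gain_ge0 andbT leNgt; apply/negP => /lt_step.
by rewrite eq_loss ltxx.
Qed.
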